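(* Let $R>0$ and let $f\colon\mathbb{R}\to(0,\infty)$ be a twice continuously differentiable convex function with $t^2+f(t)^2>R^2$ for all $t$. Let $\alpha(t)=\dfrac{tf'(t)-f(t)}{\sqrt{1+f'(t)^2}}$ and $D=\{t\in\mathbb{R}\mid\alpha(t)<R\}$. Then the function $x\colon D\to\mathbb{R}$, $$x(t)=t+\frac{f'(t)}{2\sqrt{1+f'(t)^2}}\cdot\frac{t^2+f(t)^2-R^2}{R-\alpha(t)},$$ is a bijection from $D$ onto $\mathbb{R}$ and $x'(t)\ne0$ for all $t\in D$.
   Context: Geometrically, with $K$ the closed disk of radius $R$ centered at the origin and $L$ the epigraph of $f$, $(x(t),y(t))$ with $y(t)=f(t)-\frac{1}{2\sqrt{1+f'(t)^2}}\cdot\frac{t^2+f(t)^2-R^2}{R-\alpha(t)}$ is the point equidistant from $K$ and $L$ whose nearest point in $L$ is $(t,f(t))$. *)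

From Stdlib Require Import Reals.
From Coquelicot Require Import Coquelicot.
Open Scope R_scope.

Definition C2 (f : R -> R) : Prop :=
  forall t, ex_derive f t /\ ex_derive (Derive f) t /\
            continuous (Derive (Derive f)) t.

Definition convex_fun (f : R -> R) : Prop :=
  forall x y l, 0 <= l <= 1 ->
    f (l * x + (1 - l) * y) <= l * f x + (1 - l) * f y.

From Stdlib Require Import Reals Lra Psatz Classical_Prop.
From Coquelicot Require Import Coquelicot.
Open Scope R_scope.

(* Write g = f', s = sqrt (1 + g^2) and c = R - alpha.  A direct computation gives
     x' = (1 + g (t + f g) / (c s)) * (1 + f'' (t^2 + f^2 - R^2) / (2 c s^3)),
   whose first factor equals (R s + f s^2) / (c s); hence x' > 0 on D.
   Off D one has t g > f > 0, and alpha' = f'' (t + f g) / s^3 then has the sign of t,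
   so a point leaving D never returns further out: D is an interval containing 0 and
   x is strictly increasing on it.  If D has a finite right end b, then c -> 0+ while
   g (t^2 + f^2 - R^2) / (2 s) stays near a positive value as t -> b-, so x -> +oo;
   otherwise x t >= t/2 - |f'(0)| f(0)/2 for t >= 0.  The reflection t |-> -t
   exchanges the two ends of D, and the intermediate value theorem gives surjectivity. *)

Lemma continuity_pt_of_is_derive (f : R -> R) (t l : R) :
  is_derive f t l -> continuity_pt f t.
Proof.
  intros Hd. apply continuity_pt_filterlim. apply (ex_derive_continuous f t). now exists l.
Qed.

Lemma continuity_pt_eps (f : R -> R) (t : R) : continuity_pt f t ->
  forall e, 0 < e -> exists d, 0 < d /\ forall u, Rabs (u - t) < d -> Rabs (f u - f t) < e.
Proof.
  intros Hc e He. destruct (Hc e He) as [d [Hd Hnear]]. exists d; split; [exact Hd|].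
  intros u Hu. destruct (Req_dec u t) as [->|Hne].
  - now rewrite Rminus_eq_0, Rabs_R0.
  - apply Hnear. split; [split; [exact I | auto] | exact Hu].
Qed.

Lemma derive_le_of_right_slopes (phi : R -> R) (x0 L C : R) :
  is_derive phi x0 L ->
  (forall h, 0 < h <= 1 -> phi (x0 + h) - phi x0 <= h * C) -> L <= C.
Proof.
  intros Hd Hslope. destruct (Rle_or_lt L C) as [|HCL]; [assumption|exfalso].
  destruct (proj1 (is_derive_Reals _ _ _) Hd (L - C)) as [d Hquot]; [lra|].
  pose proof (cond_pos d).
  set (h := Rmin 1 (d / 2)).
  assert (Hh : 0 < h <= 1) by (split; [apply Rmin_glb_lt | apply Rmin_l]; lra).
  assert (Hhd : h < d) by (unfold h; pose proof (Rmin_r 1 (d / 2)); lra).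
  specialize (Hquot h ltac:(lra) ltac:(rewrite Rabs_right; lra)).
  apply Rabs_def2 in Hquot.
  specialize (Hslope h Hh).
  assert ((phi (x0 + h) - phi x0) / h * h = phi (x0 + h) - phi x0) by (field; lra).
  nra.
Qed.

Lemma convex_above_tangents (f g : R -> R) :
  (forall t, is_derive f t (g t)) -> convex_fun f ->
  forall a b, f b + g b * (a - b) <= f a.
Proof.
  intros Hd Hconv a b.
  assert (Hphi : is_derive (fun h => f (b + h * (a - b))) 0 (g b * (a - b))).
  { auto_derive.
    - exists (g (b + 0 * (a - b))). apply Hd.
    - rewrite (is_derive_unique _ _ _ (Hd _)), Rmult_0_l, Rplus_0_r. ring. }
  enough (g b * (a - b) <= f a - f b) by lra.
  apply (derive_le_of_right_slopes _ 0 _ _ Hphi).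
  intros h Hh. specialize (Hconv a b h ltac:(lra)).
  replace (b + (0 + h) * (a - b)) with (h * a + (1 - h) * b) by ring.
  replace (b + 0 * (a - b)) with b by ring.
  lra.
Qed.

Lemma slopes_nondecreasing_of_tangents (f g : R -> R) :
  (forall a b, f b + g b * (a - b) <= f a) -> forall a b, a <= b -> g a <= g b.
Proof.
  intros Ht a b Hab. destruct (Req_dec a b) as [->|Hne]; [lra|].
  pose proof (Ht a b). pose proof (Ht b a). nra.
Qed.

Lemma derive_nonneg_of_nondecreasing (g : R -> R) (t l : R) :
  (forall a b, a <= b -> g a <= g b) -> is_derive g t l -> 0 <= l.
Proof.
  intros Hmono Hd.
  enough (- l <= 0) by lra.
  apply (derive_le_of_right_slopes (fun u => - g u) t); [now apply (is_derive_opp g)|].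
  intros h Hh. pose proof (Hmono t (t + h) ltac:(lra)). lra.
Qed.

Definition is_interval (D : R -> Prop) : Prop :=
  forall a b c, a <= b <= c -> D a -> D c -> D b.

Lemma increasing_of_pos_derive (D : R -> Prop) (x : R -> R) :
  is_interval D -> (forall t, D t -> exists l, is_derive x t l /\ 0 < l) ->
  forall s t, D s -> D t -> s < t -> x s < x t.
Proof.
  intros HD Hx s t Hs Ht Hst.
  assert (Hbetween : forall u, s <= u <= t -> is_derive x u (Derive x u) /\ 0 < Derive x u).
  { intros u Hu. destruct (Hx u (HD s u t Hu Hs Ht)) as [l [Hl Hpos]].
    now rewrite (is_derive_unique _ _ _ Hl). }
  destruct (MVT_gen x s t (Derive x)) as [c [Hc E]].
  - rewrite Rmin_left, Rmax_right by lra. intros u Hu. apply Hbetween. lra.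
  - rewrite Rmin_left, Rmax_right by lra. intros u Hu.
    exact (continuity_pt_of_is_derive _ _ _ (proj1 (Hbetween u Hu))).
  - rewrite Rmin_left, Rmax_right in Hc by lra.
    pose proof (proj2 (Hbetween c Hc)). nra.
Qed.

Lemma bijective_of_pos_derive_unbounded (D : R -> Prop) (x : R -> R) :
  is_interval D -> (forall t, D t -> exists l, is_derive x t l /\ 0 < l) ->
  (forall M, exists t, D t /\ M < x t) -> (forall M, exists t, D t /\ x t < M) ->
  forall y, exists! t, D t /\ x t = y.
Proof.
  intros HD Hx Hup Hdown y.
  pose proof (increasing_of_pos_derive D x HD Hx) as Hincr.
  destruct (Hdown y) as [t1 [Ht1 Hx1]]. destruct (Hup y) as [t2 [Ht2 Hx2]].
  assert (Ht12 : t1 < t2).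
  { destruct (Rtotal_order t1 t2) as [|[<-|Hlt]]; [assumption|lra|].
    specialize (Hincr _ _ Ht2 Ht1 Hlt). lra. }
  destruct (Ranalysis5.IVT_interv (fun t => x t - y) t1 t2) as [z [Hz Hxz]];
    [|exact Ht12|lra|lra|].
  - intros u Hu. destruct (Hx u (HD t1 u t2 Hu Ht1 Ht2)) as [l [Hl _]].
    apply (continuity_pt_minus x (fun _ => y)).
    + exact (continuity_pt_of_is_derive _ _ _ Hl).
    + now apply continuity_pt_const.
  - assert (Hz' : D z) by exact (HD t1 z t2 Hz Ht1 Ht2).
    exists z. split; [split; [exact Hz'|lra]|].
    intros t [Ht Hxt]. destruct (Rtotal_order z t) as [Hlt|[Heq|Hlt]]; [|exact Heq|].
    + specialize (Hincr _ _ Hz' Ht Hlt). lra.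
    + specialize (Hincr _ _ Ht Hz' Hlt). lra.
Qed.

Lemma first_exit (phi : R -> R) (r a t1 : R) :
  (forall t, continuity_pt phi t) -> phi a < r -> a <= t1 -> r <= phi t1 ->
  exists b, a < b /\ r <= phi b /\ forall u, a <= u < b -> phi u < r.
Proof.
  intros Hcont Ha Hat1 Ht1.
  set (E := fun t => a <= t /\ forall u, a <= u <= t -> phi u < r).
  assert (HEa : E a) by (split; [lra|]; intros u Hu; now replace u with a by lra).
  assert (HE_bound : bound E).
  { exists t1. intros t [Hat Hlt]. destruct (Rle_or_lt t t1) as [|Hlt1]; [assumption|].
    specialize (Hlt t1 ltac:(lra)). lra. }
  destruct (completeness E HE_bound (ex_intro _ a HEa)) as [b [Hub Hlub]].
  assert (Hab : a <= b) by exact (Hub a HEa).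
  assert (Hbelow : forall u, a <= u < b -> phi u < r).
  { intros u Hu. destruct (Rlt_or_le (phi u) r) as [|Hu']; [assumption|exfalso].
    assert (Hubu : is_upper_bound E u).
    { intros t [Hat Hlt]. destruct (Rle_or_lt t u) as [|Hut]; [assumption|].
      specialize (Hlt u ltac:(lra)). lra. }
    specialize (Hlub u Hubu). lra. }
  assert (Hb : r <= phi b).
  { destruct (Rlt_or_le (phi b) r) as [Hb|]; [exfalso|assumption].
    destruct (continuity_pt_eps _ _ (Hcont b) (r - phi b)) as [d [Hd Hnear]]; [lra|].
    assert (HE : E (b + d / 2)).
    { split; [lra|]. intros u Hu. destruct (Rlt_or_le u b); [apply Hbelow; lra|].
      specialize (Hnear u ltac:(rewrite Rabs_right; lra)). apply Rabs_def2 in Hnear. lra. }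
    specialize (Hub _ HE). lra. }
  exists b. split; [|split; assumption].
  destruct (Req_dec a b) as [<-|]; lra.
Qed.

Lemma ratio_unbounded_at_left (K c : R -> R) (a b : R) :
  a < b -> continuity_pt K b -> continuity_pt c b -> 0 < K b -> c b <= 0 ->
  (forall t, a <= t < b -> 0 < c t) ->
  forall M, exists t, a <= t < b /\ M < K t / c t.
Proof.
  intros Hab HK Hc HKb Hcb Hpos M.
  pose proof (Rabs_pos M). pose proof (Rle_abs M).
  set (e := K b / (2 * (Rabs M + 1))).
  assert (He : 0 < e) by (apply Rdiv_lt_0_compat; lra).
  assert (HKe : K b / 2 = (Rabs M + 1) * e) by (unfold e; field; lra).
  destruct (continuity_pt_eps _ _ HK (K b / 2)) as [d1 [Hd1 HKnear]]; [lra|].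
  destruct (continuity_pt_eps _ _ Hc e He) as [d2 [Hd2 Hcnear]].
  assert (Hd : 0 < Rmin d1 d2) by (apply Rmin_glb_lt; lra).
  pose proof (Rmin_l d1 d2). pose proof (Rmin_r d1 d2).
  set (d := Rmin d1 d2) in *.
  pose proof (Rmax_l a (b - d / 2)). pose proof (Rmax_r a (b - d / 2)).
  assert (Rmax a (b - d / 2) < b) by (apply Rmax_lub_lt; lra).
  set (t := Rmax a (b - d / 2)) in *.
  assert (Ht : a <= t < b) by lra.
  assert (Hdist : Rabs (t - b) < d) by (rewrite Rabs_left; lra).
  specialize (HKnear t ltac:(lra)). specialize (Hcnear t ltac:(lra)).
  apply Rabs_def2 in HKnear. apply Rabs_def2 in Hcnear.
  pose proof (Hpos t Ht).
  assert (K t / c t * c t = K t) by (field; lra).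
  assert ((Rabs M + 1) * c t < K t) by nra.
  exists t. split; [exact Ht|]. nra.
Qed.

Lemma sqrt_1_plus_sq_pos (a : R) : 0 < sqrt (1 + a ^ 2).
Proof. apply sqrt_lt_R0. nra. Qed.

Lemma sqrt_1_plus_sq_sq (a : R) : sqrt (1 + a ^ 2) * sqrt (1 + a ^ 2) = 1 + a ^ 2.
Proof. apply sqrt_sqrt. nra. Qed.

(* Signed distance from the origin to the tangent line at (t, f t), positive on the
   side of the epigraph. *)
Definition alpha (f g : R -> R) (t : R) : R := (t * g t - f t) / sqrt (1 + g t ^ 2).

Definition bisector_x (r : R) (f g : R -> R) (t : R) : R :=
  t + g t / (2 * sqrt (1 + g t ^ 2)) * ((t ^ 2 + f t ^ 2 - r ^ 2) / (r - alpha f g t)).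

Definition bisector_dx (r : R) (f g g2 : R -> R) (t : R) : R :=
  (1 + g t * (t + f t * g t) / ((r - alpha f g t) * sqrt (1 + g t ^ 2))) *
  (1 + g2 t * (t ^ 2 + f t ^ 2 - r ^ 2) /
         (2 * (r - alpha f g t) * sqrt (1 + g t ^ 2) ^ 3)).

(* The hypotheses of the theorem with g = f' and g2 = f''; convexity is used only
   through the tangent-line inequality. *)
Set Implicit Arguments.
Record admissible (r : R) (f g g2 : R -> R) : Prop := {
  radius_pos : 0 < r;
  f_pos : forall t, 0 < f t;
  outside_disk : forall t, r ^ 2 < t ^ 2 + f t ^ 2;
  f_derive : forall t, is_derive f t (g t);
  g_derive : forall t, is_derive g t (g2 t);
  above_tangents : forall a b, f b + g b * (a - b) <= f a }.
Unset Implicit Arguments.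

Section Bisector.

Context {r : R} {f g g2 : R -> R} (Hadm : admissible r f g g2).

Lemma f_ex_derive t : ex_derive f t.
Proof. exists (g t). exact (f_derive Hadm t). Qed.

Lemma g_ex_derive t : ex_derive g t.
Proof. exists (g2 t). exact (g_derive Hadm t). Qed.

Lemma g_nondecreasing a b : a <= b -> g a <= g b.
Proof. exact (slopes_nondecreasing_of_tangents f g (above_tangents Hadm) a b). Qed.

Lemma g2_nonneg t : 0 <= g2 t.
Proof. exact (derive_nonneg_of_nondecreasing g t _ g_nondecreasing (g_derive Hadm t)). Qed.

Lemma alpha_derive t :
  is_derive (alpha f g) t (g2 t * (t + f t * g t) / sqrt (1 + g t ^ 2) ^ 3).
Proof.
  pose proof (sqrt_1_plus_sq_pos (g t)) as Hs. pose proof (sqrt_1_plus_sq_sq (g t)) as Hss.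
  unfold alpha. auto_derive.
  - repeat split; try apply f_ex_derive; try apply g_ex_derive; simpl in Hs; nra.
  - rewrite (is_derive_unique (fun u : R => f u) t _ (f_derive Hadm t)),
      (is_derive_unique (fun u : R => g u) t _ (g_derive Hadm t)).
    replace (g t * (g t * 1)) with (g t ^ 2) by ring.
    set (s := sqrt (1 + g t ^ 2)) in *.
    replace (t + f t * g t) with (t * (s * s) - (t * g t - f t) * g t) by (rewrite Hss; ring).
    field. lra.
Qed.

Lemma alpha_ge_radius_sign t : r <= alpha f g t -> 0 < t * g t.
Proof.
  intros Hout. unfold alpha in Hout.
  pose proof (sqrt_1_plus_sq_pos (g t)) as Hs. pose proof (f_pos Hadm t).
  pose proof (radius_pos Hadm).
  assert ((t * g t - f t) / sqrt (1 + g t ^ 2) * sqrt (1 + g t ^ 2) = t * g t - f t)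
    by (field; lra).
  nra.
Qed.

Lemma alpha_ge_radius_outward a t : r <= alpha f g a -> 0 <= a * (t - a) -> r <= alpha f g t.
Proof.
  intros Ha Hdir. destruct (Req_dec a t) as [<-|Hne]; [exact Ha|].
  pose proof (alpha_ge_radius_sign a Ha) as Hag.
  destruct (MVT_gen (alpha f g) a t
              (fun u => g2 u * (u + f u * g u) / sqrt (1 + g u ^ 2) ^ 3)) as [c [Hc E]].
  - intros u _. apply alpha_derive.
  - intros u _. exact (continuity_pt_of_is_derive _ _ _ (alpha_derive u)).
  - pose proof (f_pos Hadm c) as Hfc.
    assert (Hside : 0 < (c + f c * g c) * (t - a)).
    { destruct (Rlt_or_le 0 a) as [Hapos|Haneg].
      - assert (a < t) by nra. rewrite Rmin_left, Rmax_right in Hc by lra.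
        pose proof (g_nondecreasing a c (proj1 Hc)). assert (0 < g a) by nra.
        assert (0 < f c * g c) by (apply Rmult_lt_0_compat; lra).
        apply Rmult_lt_0_compat; lra.
      - assert (a <> 0) by (intros ->; lra). assert (t < a) by nra.
        rewrite Rmin_right, Rmax_left in Hc by lra.
        pose proof (g_nondecreasing c a (proj2 Hc)). assert (g a < 0) by nra.
        assert (f c * g c < 0) by nra.
        nra. }
    pose proof (g2_nonneg c).
    pose proof (sqrt_1_plus_sq_pos (g c)) as Hs. pose proof (pow_lt _ 3 Hs).
    assert (0 <= g2 c * ((c + f c * g c) * (t - a)) / sqrt (1 + g c ^ 2) ^ 3)
      by (apply Rdiv_le_0_compat; nra).
    assert (g2 c * (c + f c * g c) / sqrt (1 + g c ^ 2) ^ 3 * (t - a) =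
            g2 c * ((c + f c * g c) * (t - a)) / sqrt (1 + g c ^ 2) ^ 3) by (field; lra).
    lra.
Qed.

Lemma alpha_lt_is_interval : is_interval (fun t => alpha f g t < r).
Proof.
  intros t1 t t2 Ht H1 H2.
  destruct (Rlt_or_le (alpha f g t) r) as [|Hout]; [assumption|exfalso].
  pose proof (alpha_ge_radius_sign t Hout).
  destruct (Rlt_or_le 0 t).
  - pose proof (alpha_ge_radius_outward t t2 Hout ltac:(nra)). lra.
  - pose proof (alpha_ge_radius_outward t t1 Hout ltac:(nra)). lra.
Qed.

Lemma bisector_x_derive t :
  alpha f g t < r -> is_derive (bisector_x r f g) t (bisector_dx r f g g2 t).
Proof.
  intros Hin.
  pose proof (sqrt_1_plus_sq_pos (g t)) as Hs. pose proof (sqrt_1_plus_sq_sq (g t)) as Hss.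
  pose (p := fun u => g u / (2 * sqrt (1 + g u ^ 2))).
  pose (q := fun u => (u ^ 2 + f u ^ 2 - r ^ 2) / (r - alpha f g u)).
  assert (Hp : is_derive p t (g2 t / (2 * sqrt (1 + g t ^ 2) ^ 3))).
  { unfold p. auto_derive.
    - repeat split; try apply g_ex_derive; simpl in Hs; nra.
    - rewrite (is_derive_unique (fun u : R => g u) t _ (g_derive Hadm t)).
      replace (g t * (g t * 1)) with (g t ^ 2) by ring.
      set (s := sqrt (1 + g t ^ 2)) in *.
      replace (g2 t / (2 * s ^ 3)) with (g2 t * (s * s - g t ^ 2) / (2 * s ^ 3))
        by (rewrite Hss; field; lra).
      field. lra. }
  assert (Hq : is_derive q t
    (((2 * t + 2 * f t * g t) * (r - alpha f g t) +
      (t ^ 2 + f t ^ 2 - r ^ 2) * (g2 t * (t + f t * g t) / sqrt (1 + g t ^ 2) ^ 3))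
     / (r - alpha f g t) ^ 2)).
  { unfold q. auto_derive.
    - repeat split; try apply f_ex_derive; [eexists; apply alpha_derive | lra].
    - rewrite (is_derive_unique (fun u : R => f u) t _ (f_derive Hadm t)),
        (is_derive_unique (fun u : R => alpha f g u) t _ (alpha_derive t)).
      field. lra. }
  change (bisector_x r f g) with (fun u => u + p u * q u).
  (* Made opaque so that [auto_derive] uses [Hp] and [Hq] instead of re-deriving. *)
  assert (Ept : p t = g t / (2 * sqrt (1 + g t ^ 2))) by reflexivity.
  assert (Eqt : q t = (t ^ 2 + f t ^ 2 - r ^ 2) / (r - alpha f g t)) by reflexivity.
  clearbody p q.
  auto_derive.
  - repeat split; eexists; eassumption.
  - rewrite (is_derive_unique (fun u : R => p u) t _ Hp),
      (is_derive_unique (fun u : R => q u) t _ Hq).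
    rewrite Ept, Eqt. unfold bisector_dx.
    field. lra.
Qed.

Lemma bisector_dx_pos t : alpha f g t < r -> 0 < bisector_dx r f g g2 t.
Proof.
  intros Hin.
  pose proof (sqrt_1_plus_sq_pos (g t)) as Hs. pose proof (sqrt_1_plus_sq_sq (g t)) as Hss.
  pose proof (radius_pos Hadm). pose proof (f_pos Hadm t).
  pose proof (outside_disk Hadm t). pose proof (g2_nonneg t).
  assert (Hcs : (r - alpha f g t) * sqrt (1 + g t ^ 2) = r * sqrt (1 + g t ^ 2) - (t * g t - f t))
    by (unfold alpha; field; lra).
  unfold bisector_dx.
  set (s := sqrt (1 + g t ^ 2)) in *. set (c := r - alpha f g t) in *.
  assert (Hc : 0 < c) by (unfold c; lra).
  replace (1 + g t * (t + f t * g t) / (c * s)) with ((r * s + f t * (s * s)) / (c * s)).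
  2:{ rewrite Hss. field_simplify; [|lra|lra]. rewrite (Rmult_comm s c), Hcs. f_equal. ring. }
  apply Rmult_lt_0_compat.
  - apply Rdiv_lt_0_compat; nra.
  - assert (0 <= g2 t * (t ^ 2 + f t ^ 2 - r ^ 2) / (2 * c * s ^ 3))
      by (apply Rdiv_le_0_compat; [nra | pose proof (pow_lt s 3 Hs); nra]).
    lra.
Qed.

Lemma bisector_x_pos_derive t :
  alpha f g t < r -> exists l, is_derive (bisector_x r f g) t l /\ 0 < l.
Proof.
  intros Hin. exists (bisector_dx r f g g2 t).
  split; [exact (bisector_x_derive t Hin) | exact (bisector_dx_pos t Hin)].
Qed.

Lemma bisector_x_ge_half t :
  0 < t -> alpha f g t < r -> t / 2 - Rabs (g 0) * f 0 / 2 <= bisector_x r f g t.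
Proof.
  intros Ht Hin.
  pose proof (sqrt_1_plus_sq_pos (g t)) as Hs.
  pose proof (radius_pos Hadm). pose proof (f_pos Hadm t). pose proof (f_pos Hadm 0).
  pose proof (outside_disk Hadm t). pose proof (Rabs_pos (g 0)).
  assert (Hcs : (r - alpha f g t) * sqrt (1 + g t ^ 2) = r * sqrt (1 + g t ^ 2) - t * g t + f t)
    by (unfold alpha; field; lra).
  assert (Hcs_pos : 0 < r * sqrt (1 + g t ^ 2) - t * g t + f t)
    by (rewrite <- Hcs; apply Rmult_lt_0_compat; lra).
  replace (bisector_x r f g t) with
    (t + g t * (t ^ 2 + f t ^ 2 - r ^ 2) / (2 * (r * sqrt (1 + g t ^ 2) - t * g t + f t)))
    by (rewrite <- Hcs; unfold bisector_x; field; lra).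
  set (s := sqrt (1 + g t ^ 2)) in *. set (P := r * s - t * g t + f t) in *.
  set (Q := g t * (t ^ 2 + f t ^ 2 - r ^ 2) / (2 * P)).
  assert (HQ : Q * (2 * P) = g t * (t ^ 2 + f t ^ 2 - r ^ 2)) by (unfold Q; field; lra).
  destruct (Rle_or_lt 0 (g t)) as [Hg|Hg].
  - assert (0 <= Q) by (apply Rdiv_le_0_compat; nra). nra.
  - assert (Hft : f t <= f 0) by (pose proof (above_tangents Hadm 0 t); nra).
    assert (Hg0 : g 0 <= g t) by (apply g_nondecreasing; lra).
    assert (- g t * f t <= Rabs (g 0) * f 0) by (rewrite Rabs_left by lra; nra).
    (* with G = - g t > 0: (t + G f) P >= (t + G f) (f + t G) >= G (t^2 + f^2) *)
    assert (- g t * (t ^ 2 + f t ^ 2 - r ^ 2) <= (t - g t * f t) * P).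
    { unfold P. assert (0 < r * s) by nra.
      assert (0 <= (t - g t * f t) * (r * s)) by (apply Rmult_le_pos; nra).
      assert (0 <= - g t * r ^ 2) by nra.
      assert (0 <= g t * g t * (f t * t)) by (apply Rmult_le_pos; nra).
      nra. }
    nra.
Qed.

Lemma alpha_0_neg : alpha f g 0 < 0.
Proof.
  unfold alpha. pose proof (sqrt_1_plus_sq_pos (g 0)). pose proof (f_pos Hadm 0).
  assert (0 < f 0 / sqrt (1 + g 0 ^ 2)) by (apply Rdiv_lt_0_compat; lra).
  replace ((0 * g 0 - f 0) / sqrt (1 + g 0 ^ 2)) with (- (f 0 / sqrt (1 + g 0 ^ 2)))
    by (field; lra).
  lra.
Qed.

Lemma bisector_x_unbounded_before_exit b :
  0 < b -> r <= alpha f g b -> (forall u, 0 <= u < b -> alpha f g u < r) ->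
  forall M, exists t, 0 <= t < b /\ M < bisector_x r f g t.
Proof.
  intros Hb Hbout Hbelow M.
  set (K := fun t => g t / (2 * sqrt (1 + g t ^ 2)) * (t ^ 2 + f t ^ 2 - r ^ 2)).
  assert (HKb : 0 < K b).
  { pose proof (alpha_ge_radius_sign b Hbout). pose proof (sqrt_1_plus_sq_pos (g b)).
    pose proof (outside_disk Hadm b).
    assert (0 < g b) by nra.
    apply Rmult_lt_0_compat; [apply Rdiv_lt_0_compat|]; lra. }
  assert (HKcont : continuity_pt K b).
  { apply (continuity_pt_of_is_derive _ _ (Derive K b)), Derive_correct. unfold K.
    pose proof (sqrt_1_plus_sq_pos (g b)) as Hs. auto_derive.
    repeat split; try apply f_ex_derive; try apply g_ex_derive; simpl in Hs; nra. }
  assert (Hccont : continuity_pt (fun t => r - alpha f g t) b).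
  { apply (continuity_pt_minus (fun _ => r) (alpha f g)).
    - now apply continuity_pt_const.
    - exact (continuity_pt_of_is_derive _ _ _ (alpha_derive b)). }
  destruct (ratio_unbounded_at_left K (fun t => r - alpha f g t) 0 b Hb HKcont Hccont HKb)
    with M as [t [Ht HM]]; [lra | intros u Hu; pose proof (Hbelow u Hu); lra |].
  exists t. split; [exact Ht|].
  pose proof (Hbelow t Ht). pose proof (sqrt_1_plus_sq_pos (g t)).
  replace (bisector_x r f g t) with (t + K t / (r - alpha f g t))
    by (unfold bisector_x, K; field; lra).
  lra.
Qed.

Lemma bisector_x_unbounded_above M : exists t, alpha f g t < r /\ M < bisector_x r f g t.
Proof.
  pose proof (radius_pos Hadm). pose proof alpha_0_neg.
  destruct (classic (exists t1, 0 <= t1 /\ r <= alpha f g t1)) as [[t1 [Ht1 Hout]]|Hin].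
  - destruct (first_exit (alpha f g) r 0 t1) as [b [Hb [Hbout Hbelow]]];
      [intros t; exact (continuity_pt_of_is_derive _ _ _ (alpha_derive t)) | lra | lra | lra |].
    destruct (bisector_x_unbounded_before_exit b Hb Hbout Hbelow M) as [t [Ht HM]].
    exists t. split; [apply Hbelow|]; assumption.
  - set (t := 2 * (Rabs M + Rabs (g 0) * f 0 / 2) + 1).
    pose proof (Rabs_pos M). pose proof (Rle_abs M).
    pose proof (Rabs_pos (g 0)). pose proof (f_pos Hadm 0).
    assert (0 <= Rabs (g 0) * f 0) by (apply Rmult_le_pos; lra).
    assert (Ht : 0 < t) by (unfold t; lra).
    assert (Htin : alpha f g t < r).
    { destruct (Rlt_or_le (alpha f g t) r) as [|Hout]; [assumption|].
      exfalso. apply Hin. exists t. split; lra. }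
    exists t. split; [exact Htin|].
    pose proof (bisector_x_ge_half t Ht Htin). unfold t in *. lra.
Qed.

End Bisector.

Lemma admissible_reflect {r f g g2} (Hadm : admissible r f g g2) :
  admissible r (fun t => f (- t)) (fun t => - g (- t)) (fun t => g2 (- t)).
Proof.
  split.
  - exact (radius_pos Hadm).
  - intros t. apply (f_pos Hadm).
  - intros t. replace (t ^ 2) with ((- t) ^ 2) by ring. apply (outside_disk Hadm).
  - intros t. auto_derive; [exact (f_ex_derive Hadm _)|].
    rewrite (is_derive_unique (fun u : R => f u) _ _ (f_derive Hadm (- t))). ring.
  - intros t. auto_derive; [exact (g_ex_derive Hadm _)|].
    rewrite (is_derive_unique (fun u : R => g u) _ _ (g_derive Hadm (- t))). ring.
  - intros a b. replace (- g (- b) * (a - b)) with (g (- b) * (- a - - b)) by ring.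
    apply (above_tangents Hadm).
Qed.

Lemma alpha_reflect f g t :
  alpha (fun u => f (- u)) (fun u => - g (- u)) t = alpha f g (- t).
Proof.
  unfold alpha. replace ((- g (- t)) ^ 2) with (g (- t) ^ 2) by ring. f_equal. ring.
Qed.

Lemma bisector_x_reflect r f g t :
  bisector_x r (fun u => f (- u)) (fun u => - g (- u)) t = - bisector_x r f g (- t).
Proof.
  unfold bisector_x. rewrite alpha_reflect.
  replace ((- g (- t)) ^ 2) with (g (- t) ^ 2) by ring.
  replace ((- t) ^ 2) with (t ^ 2) by ring.
  unfold Rdiv. ring.
Qed.

Lemma bisector_x_unbounded_below {r f g g2} (Hadm : admissible r f g g2) M :
  exists t, alpha f g t < r /\ bisector_x r f g t < M.
Proof.
  destruct (bisector_x_unbounded_above (admissible_reflect Hadm) (- M)) as [t [Hin HM]].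
  rewrite alpha_reflect in Hin. rewrite bisector_x_reflect in HM.
  exists (- t). split; lra.
Qed.

Lemma admissible_of_C2_convex r f :
  0 < r -> (forall t, 0 < f t) -> C2 f -> convex_fun f ->
  (forall t, t ^ 2 + f t ^ 2 > r ^ 2) ->
  admissible r f (Derive f) (Derive (Derive f)).
Proof.
  intros Hr Hf HC Hconv Hout.
  assert (Hd : forall t, is_derive f t (Derive f t)) by (intros t; apply Derive_correct, HC).
  split; try assumption.
  - intros t. apply Derive_correct, HC.
  - exact (convex_above_tangents f (Derive f) Hd Hconv).
Qed.

Theorem theorem7 (R0 : R) (f : R -> R) :
  0 < R0 ->
  (forall t, 0 < f t) ->
  C2 f ->
  convex_fun f ->
  (forall t, t ^ 2 + f t ^ 2 > R0 ^ 2) ->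
  let alpha := fun t => (t * Derive f t - f t) / sqrt (1 + Derive f t ^ 2) in
  let D := fun t => alpha t < R0 in
  let x := fun t => t + Derive f t / (2 * sqrt (1 + Derive f t ^ 2))
                        * ((t ^ 2 + f t ^ 2 - R0 ^ 2) / (R0 - alpha t)) in
  (forall y, exists! t, D t /\ x t = y) /\
  (forall t, D t -> exists l, is_derive x t l /\ l <> 0).
Proof.
  intros HR Hf HC Hconv Hout alpha D x.
  pose proof (admissible_of_C2_convex R0 f HR Hf HC Hconv Hout) as Hadm.
  split.
  - exact (bijective_of_pos_derive_unbounded _ _ (alpha_lt_is_interval Hadm)
             (bisector_x_pos_derive Hadm) (bisector_x_unbounded_above Hadm)
             (bisector_x_unbounded_below Hadm)).
  - intros t Ht. destruct (bisector_x_pos_derive Hadm t Ht) as [l [Hl Hpos]].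
    exists l. split; [exact Hl | lra].
Qed.
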